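(* Let $\kappa$ be an ordinal of uncountable cofinality and let $Z$, $Z_Y$ be as described in the context. Suppose given, for all $\beta < \alpha$ in $[2,\kappa)$, morphisms $u^\beta_\alpha: \beta \to \alpha$ of $Z_Y$ such that $u^\gamma_\alpha = u^\beta_\alpha u^\gamma_\beta$ for all $\gamma < \beta < \alpha$ in $[2,\kappa)$. Then there exists a pair $\beta < \alpha$ in $[2,\kappa)$ such that $u^\beta_\alpha$ passes through some vertex $\gamma$ with $\gamma < \beta$.
   Context: For an ordinal $\alpha \ge 2$ let $G_\alpha$ be the free group on the set $\alpha$; for $\gamma \le \alpha$ let $D^\gamma_\alpha: G_\gamma \to G_\alpha$ be the natural inclusion. Let $Z$ be the groupoid with object set $[2,\kappa)$ generated by: the elements of $G_\alpha$ as automorphisms of the object $\alpha$; and, for each pair $\alpha \neq \beta$ in $[2,\kappa)$, a morphism $y^\beta_\alpha: \beta \to \alpha$; subject to the relations of each group $G_\alpha$ and the relations $y^\beta_\alpha \, D^{\varepsilon}_\beta(a)\, y^\alpha_\beta = D^{\varepsilon}_\alpha(a)$ for all $a \in G_\varepsilon$, $\varepsilon = \min(\alpha,\beta)$ (so $y^\alpha_\beta = (y^\beta_\alpha)^{-1}$). $Z_Y$ is the subgroupoid of $Z$ generated by the edges $y^\beta_\alpha$; every morphism of $Z_Y$ can be uniquely written as a reduced word in the generators $y^\beta_\alpha$ (i.e. $Z_Y$ is the free groupoid on the edges, with $y^\alpha_\beta$ the inverse of $y^\beta_\alpha$). A morphism of $Z_Y$ passes through a vertex $\delta$ if its reduced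 word involves a generator with source or target $\delta$; the identity $\mathrm{id}_\delta$ passes through $\delta$ and no other vertex. *)

From Stdlib Require Import List Relations.
Import ListNotations.
Set Implicit Arguments.

(** The ordinal kappa is represented by a well-ordered type (T, lt);
    ordinals are exactly the order types of well-orders. *)
Definition is_well_order {T : Type} (lt : T -> T -> Prop) : Prop :=
  (forall x, ~ lt x x) /\
  (forall x y z, lt x y -> lt y z -> lt x z) /\
  (forall x y, lt x y \/ x = y \/ lt y x) /\
  well_founded lt.

(** cf(kappa) is uncountable: kappa is nonzero and no countable
    (nat-indexed) family of elements is cofinal, i.e. every such family
    is strictly bounded above. *)
Definition uncountable_cofinality {T : Type} (lt : T -> T -> Prop) : Prop :=
  inhabited T /\ forall f : nat -> T, exists t, forall n, lt (f n) t.

(** x lies in [2, kappa): x has at least the two predecessors 0 < 1. *)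
Definition ge2 {T : Type} (lt : T -> T -> Prop) (x : T) : Prop :=
  exists a b, lt a b /\ lt b x.

(** Morphisms of Z_Y (free groupoid on the complete graph on the vertex
    set V, edges y^b_a : b -> a for a <> b) are represented by their
    reduced words, i.e. as vertex lists [v0; v1; ...; vn] from source v0
    to target vn, with consecutive vertices distinct (each step is a
    generator y^{v_i}_{v_{i+1}}) and no backtracking (v_i <> v_{i+2}).
    The identity at b is [b]. *)
Fixpoint adj_distinct {T : Type} (p : list T) : Prop :=
  match p with
  | x :: ((y :: _) as q) => x <> y /\ adj_distinct q
  | _ => True
  end.

Fixpoint no_backtrack {T : Type} (p : list T) : Prop :=
  match p with
  | x :: ((_ :: z :: _) as q) => x <> z /\ no_backtrack q
  | _ => True
  end.

Definition reduced_path {T : Type} (V : T -> Prop) (p : list T) (s t : T)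
  : Prop :=
  Forall V p /\ adj_distinct p /\ no_backtrack p /\
  hd_error p = Some s /\ last p s = t.

(** Composition of paths: [compose q p] is q o p (first p, then q),
    as the concatenated (not necessarily reduced) word. *)
Definition compose {T : Type} (q p : list T) : list T := p ++ tl q.

Inductive cancel_step {T : Type} : list T -> list T -> Prop :=
| cancel_step_intro : forall (l1 l2 : list T) (x y : T), x <> y ->
    cancel_step (l1 ++ x :: y :: x :: l2) (l1 ++ x :: l2).

Definition path_equiv {T : Type} : list T -> list T -> Prop :=
  clos_refl_sym_trans (list T) cancel_step.

Definition passes_through {T : Type} (p : list T) (d : T) : Prop := In d p.

(* Fix r >= 2 and build an increasing sequence a_0 < a_1 < ... in which
   a_(n+1) lies above r and above every vertex of u^r_(a_n); as cf(kappa) is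
   uncountable the sequence is bounded, so it has a supremum l. The finitely
   many vertices of u^r_l below l all lie below some b = a_N. By coherence
   u^r_l is the free reduction of u^b_l u^r_b, and freely reducing the
   composite of two reduced paths always leaves a vertex c common to both.
   Then c lies on u^r_b, so c < a_(N+1) < l; it lies on u^r_l, so c < b; and
   it lies on u^b_l, which therefore passes through c < b. *)

From Stdlib Require Import List Classical ClassicalEpsilon ChoiceFacts Lia.
Import ListNotations.
Set Implicit Arguments.

Section FreeReduction.
Variable T : Type.

(* Stacks hold the word read so far in reverse order; pushing [x] onto
   [y :: x :: s] with [x <> y] cancels the backtrack, as [cancel_step] does. *)
Definition push (z : T) (s : list T) : list T :=
  match s with
  | y :: ((x :: _) as t) =>
      if excluded_middle_informative (z = x /\ x <> y) then t else z :: s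
  | _ => z :: s
  end.

Definition reduce_from (s : list T) (l : list T) : list T :=
  fold_left (fun s z => push z s) l s.

Definition reduce (l : list T) : list T := reduce_from [] l.

(* [cancel_step] never cancels [x x x], so such stacks must be allowed. *)
Fixpoint no_proper_backtrack (s : list T) : Prop :=
  match s with
  | a :: ((b :: c :: _) as t) => (a = c -> a = b) /\ no_proper_backtrack t
  | _ => True
  end.

Lemma no_proper_backtrack_tail a s :
  no_proper_backtrack (a :: s) -> no_proper_backtrack s.
Proof. destruct s as [|b [|c s]]; simpl; tauto. Qed.

Lemma no_proper_backtrack_push z s :
  no_proper_backtrack s -> no_proper_backtrack (push z s).
Proof.
  intros Hs. destruct s as [|y [|x s]]; simpl; auto.
  destruct (excluded_middle_informative (z = x /\ x <> y)) as [_|Hnc].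
  - exact (no_proper_backtrack_tail _ _ Hs).
  - split; [|exact Hs]. intros ->. apply NNPP. intros Hxy. auto.
Qed.

Lemma no_proper_backtrack_reduce_from s l :
  no_proper_backtrack s -> no_proper_backtrack (reduce_from s l).
Proof.
  revert s. induction l as [|z l IH]; simpl; auto.
  intros s Hs. apply IH, no_proper_backtrack_push, Hs.
Qed.

Lemma push_cons z s : exists t, push z s = z :: t.
Proof.
  destruct s as [|y [|x s]]; simpl; eauto.
  destruct (excluded_middle_informative (z = x /\ x <> y)) as [[-> _]|_]; eauto.
Qed.

Lemma push_backtrack x y s : no_proper_backtrack s -> x <> y ->
  push x (push y (push x s)) = push x s.
Proof.
  intros Hs Hxy.
  destruct (push_cons x s) as [t Ht].
  pose proof (no_proper_backtrack_push x s Hs) as Hok. rewrite Ht in *.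
  destruct t as [|c t]; simpl.
  - destruct (excluded_middle_informative (x = x /\ x <> y)); auto.
    tauto.
  - destruct (excluded_middle_informative (y = c /\ c <> x)) as [[-> _]|_].
    + destruct t as [|d t]; simpl; auto.
      destruct (excluded_middle_informative (x = d /\ d <> c)) as [[-> _]|_];
        auto.
      destruct Hok as [Hok _]. exfalso. auto.
    + simpl. destruct (excluded_middle_informative (x = x /\ x <> y)); auto.
      tauto.
Qed.

Lemma reduce_path_equiv l1 l2 : path_equiv l1 l2 -> reduce l1 = reduce l2.
Proof.
  induction 1 as [l1 l2 Hstep| | |]; [|reflexivity|congruence|congruence].
  destruct Hstep as [l1 l2 x y Hxy]. unfold reduce, reduce_from.
  rewrite !fold_left_app. simpl. rewrite push_backtrack; auto.
  apply no_proper_backtrack_reduce_from. exact I.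
Qed.

Lemma no_backtrack_tail (a : T) l : no_backtrack (a :: l) -> no_backtrack l.
Proof. destruct l as [|b [|c l]]; simpl; tauto. Qed.

Lemma no_backtrack_infix (l : list T) : no_backtrack l ->
  forall l1 x y z l2, l = l1 ++ x :: y :: z :: l2 -> x <> z.
Proof.
  intros Hl l1. revert l Hl.
  induction l1 as [|a l1 IH]; intros l Hl x y z l2 ->; simpl in Hl.
  - tauto.
  - exact (IH _ (no_backtrack_tail _ _ Hl) x y z l2 eq_refl).
Qed.

Lemma reduce_no_backtrack l : no_backtrack l -> reduce l = rev l.
Proof.
  intros Hl. pose proof (no_backtrack_infix Hl) as Hinf. clear Hl.
  induction l as [|z l IH] using rev_ind; auto.
  unfold reduce, reduce_from in *. rewrite fold_left_app. simpl. rewrite IH.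
  2:{ intros l1 x y w l2 ->. apply (Hinf l1 x y w (l2 ++ [z])).
      rewrite <- app_assoc. reflexivity. }
  rewrite rev_app_distr. simpl.
  destruct (rev l) as [|y [|x s]] eqn:Hrev; simpl; auto.
  destruct (excluded_middle_informative (z = x /\ x <> y)) as [[-> _]|_]; auto.
  exfalso. apply (Hinf (rev s) x y x []); auto.
  rewrite <- (rev_involutive l), Hrev. simpl.
  rewrite <- !app_assoc. reflexivity.
Qed.

(* Invariant of the stack while reducing [compose q p]: once [p] is read, its
   last vertex is common to [p] and [q]; a cancellation either pops a letter of
   [q] above the common vertex, or pops the common vertex itself and exposes a
   vertex of [p] equal to the letter of [q] just read. *)
Definition keeps_common_vertex (p q s : list T) : Prop :=
  exists A c B, s = A ++ c :: B /\ In c p /\ In c q /\ incl B p.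

Lemma keeps_common_vertex_push p q z s : In z q ->
  keeps_common_vertex p q s -> keeps_common_vertex p q (push z s).
Proof.
  intros Hz [A [c [B [-> [Hcp [Hcq HB]]]]]].
  assert (Hcons : keeps_common_vertex p q (z :: A ++ c :: B))
    by (exists (z :: A), c, B; auto).
  destruct (A ++ c :: B) as [|y [|x s]] eqn:Hs; simpl; auto.
  destruct (excluded_middle_informative (z = x /\ x <> y)) as [[-> _]|_]; auto.
  destruct A as [|a A]; simpl in Hs; injection Hs.
  - intros -> ->. exists [], x, s.
    split; [reflexivity|]. split; [apply HB, in_eq|]. split; [exact Hz|].
    intros w Hw. apply HB, in_cons, Hw.
  - intros Hrest _. exists A, c, B. auto.
Qed.

Lemma reduce_from_keeps_common_vertex p q l s : incl l q ->
  keeps_common_vertex p q s -> keeps_common_vertex p q (reduce_from s l).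
Proof.
  revert s. induction l as [|z l IH]; simpl; auto.
  intros s Hl Hs. apply IH; [intros w Hw; apply Hl, in_cons, Hw|].
  apply keeps_common_vertex_push; auto using in_eq.
Qed.

Lemma reduce_compose_common_vertex (V : T -> Prop) p q r b a :
  reduced_path V p r b -> reduced_path V q b a ->
  exists c, In c (reduce (compose q p)) /\ In c p /\ In c q.
Proof.
  intros (_ & _ & Hp & Hhdp & Hlastp) (_ & _ & _ & Hhdq & _).
  destruct q as [|b' q]; [discriminate|]. injection Hhdq as ->.
  assert (Hpnil : p <> []) by (intros ->; discriminate).
  assert (Hinv : keeps_common_vertex p (b :: q) (reduce_from (rev p) q)).
  { apply reduce_from_keeps_common_vertex; [intros w Hw; apply in_cons, Hw|].
    pose proof (app_removelast_last r Hpnil) as Ep. rewrite Hlastp in Ep.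
    exists [], b, (rev (removelast p)).
    rewrite Ep at 1. rewrite rev_app_distr. simpl.
    repeat split; auto using in_eq.
    - rewrite Ep. apply in_or_app. simpl; auto.
    - intros x Hx. rewrite Ep. apply in_or_app. left. apply in_rev, Hx. }
  destruct Hinv as (A & c & B & Hs & Hcp & Hcq & _).
  exists c. split; auto.
  unfold compose, reduce, reduce_from. rewrite fold_left_app.
  fold (reduce_from [] p). fold (reduce p). rewrite reduce_no_backtrack; auto.
  unfold reduce_from in Hs. simpl. rewrite Hs. apply in_or_app. simpl; auto.
Qed.

End FreeReduction.

Section WellOrder.
Variables (T : Type) (lt : T -> T -> Prop).
Hypothesis lt_trans : forall x y z, lt x y -> lt y z -> lt x z.

Lemma ge2_lt x y : ge2 lt x -> lt x y -> ge2 lt y.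
Proof. intros (p & q & Hpq & Hqx) Hxy. exists p, q. eauto. Qed.

Lemma well_founded_minimal : well_founded lt -> forall P : T -> Prop,
  (exists x, P x) -> exists m, P m /\ forall y, lt y m -> ~ P y.
Proof.
  intros Hwf P [x Hx]. apply NNPP. intros Hnomin. revert Hx.
  induction x as [x IH] using (well_founded_ind Hwf). intros Hx.
  apply Hnomin. exists x. split; [exact Hx|].
  intros y Hyx Hy. exact (IH y Hyx Hy).
Qed.

Lemma list_strict_upper_bound : uncountable_cofinality lt ->
  forall L : list T, exists t, forall x, In x L -> lt x t.
Proof.
  intros [[t0] Hcf] L. destruct (Hcf (fun n => nth n L t0)) as [t Ht].
  exists t. intros x Hx. destruct (In_nth L x t0 Hx) as (n & _ & <-). apply Ht.
Qed.

Lemma exists_ge2 : uncountable_cofinality lt -> exists r, ge2 lt r.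
Proof.
  intros Hcf. pose proof Hcf as [[t0] _].
  destruct (list_strict_upper_bound Hcf [t0]) as [t1 Ht1].
  destruct (list_strict_upper_bound Hcf [t1]) as [r Hr].
  exists r, t0, t1. auto using in_eq.
Qed.

Lemma exists_chain_above (g : T -> list T) : uncountable_cofinality lt ->
  exists a : nat -> T, forall n x, In x (a n :: g (a n)) -> lt x (a (S n)).
Proof.
  intros Hcf. pose proof Hcf as [[t0] _].
  destruct (functional_choice_imp_functional_dependent_choice choice
              (fun x y => forall z, In z (x :: g x) -> lt z y)
              (fun x => list_strict_upper_bound Hcf (x :: g x)) t0)
    as (a & _ & Ha).
  exists a. exact Ha.
Qed.

Section Chain.
Variable a : nat -> T.
Hypothesis chain_inc : forall n, lt (a n) (a (S n)).

Lemma chain_lt_le n m c : n <= m -> lt c (a n) -> lt c (a m).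
Proof. induction 1; eauto. Qed.

Lemma chain_supremum : (forall x y, lt x y \/ x = y \/ lt y x) ->
  well_founded lt -> (exists t, forall n, lt (a n) t) ->
  exists l, (forall n, lt (a n) l) /\ forall c, lt c l -> exists n, lt c (a n).
Proof.
  intros Htri Hwf Hbound.
  destruct (well_founded_minimal Hwf _ Hbound) as (l & Hl & Hmin).
  exists l. split; [exact Hl|]. intros c Hcl.
  destruct (not_all_ex_not _ _ (Hmin c Hcl)) as [n Hn].
  destruct (Htri (a n) c) as [Hlt|[<-|Hgt]]; [contradiction| |eauto].
  exists (S n). apply chain_inc.
Qed.

Lemma chain_bounds_finite_set l : (forall c, lt c l -> exists n, lt c (a n)) ->
  forall L : list T, exists N, forall c, In c L -> lt c l -> lt c (a N).
Proof.
  intros Hlim L. induction L as [|x L [N HN]]; [exists 0; intros c []|].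
  destruct (classic (lt x l)) as [Hxl|Hxl].
  - destruct (Hlim x Hxl) as [n Hn]. exists (n + N).
    intros c [<-|Hc] Hcl;
      [apply (chain_lt_le (n := n))|apply (chain_lt_le (n := N))]; auto; lia.
  - exists N. intros c [<-|Hc] Hcl; [contradiction|auto].
Qed.

End Chain.
End WellOrder.

Theorem lemma3p13 (T : Type) (lt : T -> T -> Prop)
  (Hwo : is_well_order lt) (Hcf : uncountable_cofinality lt)
  (u : T -> T -> list T)
  (Hu : forall b a, ge2 lt b -> ge2 lt a -> lt b a ->
        reduced_path (ge2 lt) (u b a) b a)
  (Hcoh : forall c b a, ge2 lt c -> ge2 lt b -> ge2 lt a ->
          lt c b -> lt b a ->
          path_equiv (u c a) (compose (u b a) (u c b))) :
  exists b a, ge2 lt b /\ ge2 lt a /\ lt b a /\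
    exists c, lt c b /\ passes_through (u b a) c.
Proof.
  destruct Hwo as (_ & Htrans & Htri & Hwf).
  destruct (exists_ge2 Hcf) as [r Hr].
  destruct (exists_chain_above (fun x => r :: u r x) Hcf) as [a Ha].
  assert (Hinc : forall n, lt (a n) (a (S n))) by (intros n; apply Ha, in_eq).
  destruct (chain_supremum a Hinc Htri Hwf (proj2 Hcf a)) as (l & Hl & Hlim).
  assert (Hrl : lt r l) by (apply (Htrans _ (a 1)); [apply Ha; simpl|]; auto).
  destruct (chain_bounds_finite_set lt Htrans a Hinc l Hlim (r :: u r l))
    as [N HN].
  set (b := a N).
  assert (Hrb : lt r b) by (apply HN; auto using in_eq).
  assert (Hb : ge2 lt b) by (eapply ge2_lt; eassumption).
  assert (Hgl : ge2 lt l) by (eapply ge2_lt; eauto).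
  pose proof (Hu r l Hr Hgl Hrl) as (_ & _ & Hnb & _).
  destruct (reduce_compose_common_vertex (Hu r b Hr Hb Hrb)
              (Hu b l Hb Hgl (Hl N))) as (c & Hc & Hcrb & Hcbl).
  rewrite <- (reduce_path_equiv (Hcoh r b l Hr Hb Hgl Hrb (Hl N))),
    reduce_no_backtrack in Hc by exact Hnb.
  exists b, l. split; [exact Hb|]. split; [exact Hgl|]. split; [exact (Hl N)|].
  exists c. split; [|exact Hcbl].
  apply HN; [right; apply in_rev, Hc|].
  apply (Htrans _ (a (S N))); [apply Ha; simpl|]; auto.
Qed.
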